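(* Let $\kappa$ be an infinite cardinal and let $x$ be a regular ultrafilter on $\kappa$. Assume $Y$ is a compact Hausdorff space with $w(Y)\le\kappa$, $F\subseteq Y$ has empty interior, and $y\in F$. Then there is a map $g:\kappa\to Y$ such that: (A) $\beta g$ maps $\beta\kappa$ onto $Y$; (B) $(\beta g)(x) = y$; (C) $g(\xi)\notin F$ for all $\xi<\kappa$; (D) $(\beta g)^{-1}(F)$ is nowhere dense in $\beta\kappa$.
   Context: $\beta\kappa$ is the Čech–Stone compactification of the discrete space $\kappa$, i.e. the space of ultrafilters on $\kappa$ with principal ultrafilters identified with points of $\kappa$. For $g:\kappa\to Y$ with $Y$ compact Hausdorff, $\beta g:\beta\kappa\to Y$ is the unique continuous extension of $g$. An ultrafilter $x$ on $\kappa$ is regular if there are sets $E_\alpha\in x$ ($\alpha<\kappa$) such that for every $\xi<\kappa$ the set $\{\alpha<\kappa : \xi\in E_\alpha\}$ is finite. $w(Y)$ is the weight of $Y$. *)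

From HB Require Import structures.
From mathcomp Require Import all_boot all_order all_algebra.
From mathcomp Require Import all_classical topology.
Local Open Scope card_scope.
Set Implicit Arguments. Unset Strict Implicit. Unset Printing Implicit Defensive.
Local Open Scope classical_set_scope.

(* beta K : the Cech-Stone compactification of the discrete space K,
   realized as the space of ultrafilters on K. *)
Record beta (K : Type) := Beta { uf : set_system K ; uf_ultra : UltraFilter uf }.

Definition beta_hat (K : Type) (A : set K) : set (beta K) := [set u | uf u A].

Definition beta_open (K : Type) (S : set (beta K)) :=
  forall u, S u -> exists2 A : set K, uf u A & beta_hat A `<=` S.

Definition beta_closure (K : Type) (S : set (beta K)) : set (beta K) :=
  [set u | forall U, beta_open U -> U u -> U `&` S !=set0].

Definition beta_interior (K : Type) (S : set (beta K)) : set (beta K) :=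
  [set u | exists U, [/\ beta_open U, U u & U `<=` S]].

Definition beta_nowhere_dense (K : Type) (S : set (beta K)) :=
  beta_interior (beta_closure S) = set0.

(* graph of the continuous extension  beta g : beta K -> Y  :
   (beta g)(u) = p  iff  g(u) converges to p  (unique since Y is
   compact Hausdorff). *)
Definition betaext (K : Type) (Y : topologicalType) (g : K -> Y)
  (u : beta K) (p : Y) : Prop := g @ uf u --> p.

Definition regular_ultra (K : Type) (x : set_system K) :=
  exists E : K -> set K, (forall a, x (E a)) /\
     (forall xi, finite_set [set a | E a xi]).

Definition weight_le (Y : topologicalType) (K : Type) :=
  exists2 B : set (set Y), B #<= [set: K] & basis B.

From HB Require Import structures.
From mathcomp Require Import all_boot all_order all_algebra.
From mathcomp Require Import all_classical topology.
From mathcomp Require Import zify.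
Local Open Scope classical_set_scope.

(* A regular ultrafilter contains no finite set, so, since |K| + |K| = |K|,
   [x] misses a set [D] of size |K|.  On [D], [g] runs (outside [F]) through a base of [Y] indexed by [K],
   so its range is dense and every point of [Y] is a limit along some
   ultrafilter.  A point [xi] outside [D] is sent outside [F] into the basic
   neighbourhoods [b a] of [y] with [xi \in E a]; there are finitely many by
   regularity, and [E a `\` D \in x], so [g] converges to [y] along [x].
   Finally no principal ultrafilter is sent into [F], and principal
   ultrafilters are dense in [beta K]. *)

(* [A] is the graph of an injective, possibly multivalued, map from
   [doubling_dom A * bool] into [doubling_dom A]. *)
Definition doubling_dom {T : Type} (A : set (T * bool * T)) : set T :=
  [set t | exists b s, A (t, b, s)].

Definition doubling {T : Type} (A : set (T * bool * T)) :=
  [/\ forall p p' s, A (p, s) -> A (p', s) -> p = p',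
      forall t b b' s, A (t, b, s) -> exists s', A (t, b', s') &
      forall p s, A (p, s) -> doubling_dom A s].

Lemma doubling_bigcup {T : Type} (G : set (set (T * bool * T))) :
  G `<=` @doubling T -> total_on G subset -> doubling (\bigcup_(A in G) A).
Proof.
move=> Gd Gtot; split.
- move=> p p' s [A GA As] [A' GA' A's].
  have [AA'|A'A] := Gtot _ _ GA GA'.
  + by have [inj _ _] := Gd _ GA'; apply: (inj _ _ s) => //; apply: AA'.
  + by have [inj _ _] := Gd _ GA; apply: (inj _ _ s) => //; apply: A'A.
- move=> t b b' s [A GA As]; have [_ tot _] := Gd _ GA.
  by have [s' As'] := tot _ _ b' _ As; exists s'; exists A.
- move=> p s [A GA As]; have [_ _ rng] := Gd _ GA.
  by have [b [s' As']] := rng _ _ As; exists b, s'; exists A.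
Qed.

Lemma doubling_domU {T : Type} (A N : set (T * bool * T)) :
  doubling_dom A `<=` doubling_dom (A `|` N).
Proof. by move=> t [b [s As]]; exists b, s; left. Qed.

Lemma doubling_setU {T : Type} (A N : set (T * bool * T)) :
  doubling A -> doubling N ->
  (forall t, doubling_dom A t -> ~ doubling_dom N t) -> doubling (A `|` N).
Proof.
move=> [Ainj Atot Arng] [Ninj Ntot Nrng] AN; split.
- move=> p p' s [As|Ns] [A's|N's]; [exact: Ainj As A's| | |exact: Ninj Ns N's].
  + by case: (AN s); [apply: Arng As | apply: Nrng N's].
  + by case: (AN s); [apply: Arng A's | apply: Nrng Ns].
- move=> t b b' s [As|Ns].
  + by have [s' As'] := Atot _ _ b' _ As; exists s'; left.
  + by have [s' Ns'] := Ntot _ _ b' _ Ns; exists s'; right.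
- move=> p s [As|Ns]; first exact/doubling_domU/(Arng _ _ As).
  by rewrite setUC; exact/doubling_domU/(Nrng _ _ Ns).
Qed.

Definition nat_doubling {T : Type} (e : nat -> T) : set (T * bool * T) :=
  [set q | exists n (b : bool), q = (e n, b, e (n.*2 + b)%N)].

Lemma nat_doubling_dom {T : Type} (e : nat -> T) :
  doubling_dom (nat_doubling e) `<=` range e.
Proof. by move=> _ [_ [_ [n [b [-> _ _]]]]]; exists n. Qed.

Lemma doubling_nat {T : Type} {e : nat -> T} :
  injective e -> doubling (nat_doubling e).
Proof.
move=> einj; split.
- move=> _ _ _ [n [b [-> ->]]] [n' [b' [-> /einj]]].
  rewrite -!muln2 => eq_nb.
  by have [-> ->] : n = n' /\ b = b' by case: b b' eq_nb => [] [] /=; lia.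
- by move=> t _ b' _ [n [b [-> _ _]]]; exists (e (n.*2 + b')%N), n, b'.
- move=> _ s [n [b [_ ->]]].
  by exists false, (e ((n.*2 + b).*2 + false)%N), (n.*2 + b)%N, false.
Qed.

Lemma cofinite_doubling (T : Type) :
  exists2 A : set (T * bool * T), doubling A & cofinite_set (doubling_dom A).
Proof.
have [A [dA Amax]] := Zorn_bigcup (@doubling_bigcup T).
exists A => //; apply: contrapT.
elim/Ppointed: T A dA Amax => T A dA Amax infC.
  by apply: infC; rewrite emptyE; exact: finite_set0.
have /infiniteP/pcard_leP[e] := infC.
have einj : injective e by move=> i j; apply: (@inj _ _ _ e); rewrite inE.
have eA n : ~ doubling_dom A (e n) by exact: (@funS _ _ _ _ e n I).
apply: (Amax (A `|` nat_doubling e)).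
  split; first exact: subsetUl.
  move=> /(_ (e 0%N, false, e 0%N)) Ae0; apply: (eA 0%N); exists false, (e 0%N).
  by apply: Ae0; right; exists 0%N, false.
apply: doubling_setU => //; first exact: doubling_nat.
move=> t At /(nat_doubling_dom e)[n _ ent].
by apply: (eA n); rewrite ent.
Qed.

Lemma cofinite_split_onto (T : Type) :
  exists (D : bool -> set T) (h : T -> T),
    finite_set (D true `&` D false) /\ forall b, h @` D b = setT.
Proof.
have [A [Ainj Atot Arng] finC] := cofinite_doubling T.
have /choice[pre preP] : forall s, exists p : T * bool,
    A (p, s) \/ ~ (exists p, A (p, s)) /\ p.1 = s.
  move=> s; have [[p Ap]|nA] := pselect (exists p, A (p, s)).
    by exists p; left.
  by exists (s, true); right.
exists (fun b => [set s | exists t, A (t, b, s)] `|` ~` doubling_dom A).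
exists (fun s => (pre s).1); split.
  apply: sub_finite_set finC => s [[[t At]|//] [[t' At']|//]].
  by have := Ainj _ _ _ At At'.
move=> b; rewrite -subTset => t _.
have [[b0 [s0 As0]]|nAt] := pselect (doubling_dom A t).
  have [s As] := Atot _ _ b _ As0; exists s; first by left; exists t.
  case: (preP s) => [Apre|[[]]]; last by exists (t, b).
  by rewrite (Ainj _ _ _ Apre As).
exists t; first by right.
by case: (preP t) => [/Arng/nAt|[]].
Qed.

Lemma free_ultra_small_onto {T : Type} {x : set_system T} : UltraFilter x ->
  (forall R, finite_set R -> ~ x R) ->
  exists (D : set T) (h : T -> T), ~ x D /\ h @` D = setT.
Proof.
move=> xU xfree; have [D [h [DI hD]]] := cofinite_split_onto T.
have [xDt|] := pselect (x (D true)); last by exists (D true), h.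
have [xDf|] := pselect (x (D false)); last by exists (D false), h.
by case: (xfree _ DI); apply: filterI.
Qed.

Lemma regular_notin_finite {K : Type} {x : set_system K} :
  infinite_set [set: K] -> ProperFilter x -> regular_ultra x ->
  forall R, finite_set R -> ~ x R.
Proof.
move=> Kinf xP [E [xE Efin]] R Rfin xR; apply: Kinf.
apply: sub_finite_set (bigcup_finite Rfin (fun xi _ => Efin xi)) => a _.
by have [xi [Exi Rxi]] := filter_ex (filterI (xE a) xR); exists xi.
Qed.

Lemma filter_bigcap_finite {I T : Type} {G : set_system T} {S : set I}
    {f : I -> set T} :
  Filter G -> finite_set S -> (forall i, S i -> G (f i)) ->
  G (\bigcap_(i in S) f i).
Proof.
elim/Pchoice: I => I in S f *; move=> GF Sfin Sf.
rewrite -(fset_setK Sfin); apply: filter_bigI => i.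
by rewrite in_fset_set // inE; exact: Sf.
Qed.

Lemma weight_le_indexed_basis {Y : topologicalType} {K : Type} :
  weight_le Y K -> Y ->
  exists b : K -> set Y, (forall k, open (b k) /\ b k !=set0) /\
    (forall p N, nbhs p N -> exists k, b k p /\ b k `<=` N).
Proof.
move=> [B /pcard_surjP[e eB] [Bo Bnbhs]] y.
exists (fun k => if `[< B (e k) /\ e k !=set0 >] then e k else setT).
split=> [k|p N /Bnbhs[U [BU Up] UN]] /=.
  case: asboolP => [[Bek ek0]|_]; first by split; [exact: Bo|].
  by split; [exact: openT | exists y].
have [k _ ekU] := eB U BU; exists k.
by case: asboolP => [_|[]]; rewrite ekU //; split=> //; exists p.
Qed.

Lemma closureC_interior_eq0 {T : topologicalType} (F : set T) :
  interior F = set0 -> closure (~` F) = setT.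
Proof. by move=> F0; apply: setC_inj; rewrite -interiorC setCK F0 setCT. Qed.

Lemma interior_eq0_choice {I : Type} {Y : topologicalType} {F : set Y}
    {W : I -> set Y} :
  interior F = set0 -> (forall i, exists p : Y, nbhs p (W i)) ->
  exists g : I -> Y, forall i, W i (g i) /\ ~ F (g i).
Proof.
move=> F0 Wnbhs.
suff /choice[g gW] : forall i, exists v, W i v /\ ~ F v by exists g.
move=> i; have [p Wp] := Wnbhs i.
have : closure (~` F) p by rewrite closureC_interior_eq0.
by move=> /(_ _ Wp)[v [nFv Wv]]; exists v.
Qed.

Lemma betaext_closure_range {K : Type} {Y : topologicalType} {g : K -> Y}
    {p : Y} :
  closure (range g) p -> exists u : beta K, betaext g u p.
Proof.
move=> gp; have Fp : ProperFilter (filter_from (nbhs p) (preimage g)).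
  apply: filter_from_proper => [|N /gp[_ [[k _ <-] Nk]]]; last by exists k.
  apply: filter_from_filter; first by exists setT; exact: filterT.
  by move=> N1 N2 N1p N2p; exists (N1 `&` N2) => //; exact: filterI.
have [G [GU FG]] := ultraFilterLemma Fp.
by exists (Beta GU) => N Np; apply: FG; exists N.
Qed.

Lemma betaext_principal {K : Type} {Y : topologicalType} {g : K -> Y}
    {u : beta K} {xi : K} {p : Y} :
  hausdorff_space Y -> uf u [set xi] -> betaext g u p -> p = g xi.
Proof.
move=> Yhaus uxi gup; have uU := uf_ultra u.
apply: (cvg_unique Yhaus) gup _ => N /nbhs_singleton Nxi.
by apply: filterS uxi => _ ->.
Qed.

Lemma beta_nowhere_dense_free {K : Type} {S : set (beta K)} :
  (forall u xi, S u -> ~ uf u [set xi]) -> beta_nowhere_dense S.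
Proof.
move=> Sfree; rewrite /beta_nowhere_dense -subset0 => u [U [Uo Uu US]].
have uU := uf_ultra u; have [A uA AU] := Uo u Uu.
have [xi Axi] := filter_ex uA.
pose u0 := Beta (principal_filter_ultra xi).
have xi_open : beta_open (beta_hat [set xi]) by move=> w wxi; exists [set xi].
have u0U : U u0 by apply: AU => z ->.
have [w [wxi Sw]] := US u0 u0U _ xi_open (fun z => id).
exact: Sfree Sw wxi.
Qed.

Theorem lemma7 (K : Type) (x : set_system K) (Y : topologicalType)
    (F : set Y) (y : Y) :
  infinite_set [set: K] ->
  UltraFilter x -> regular_ultra x ->
  compact [set: Y] -> hausdorff_space Y -> weight_le Y K ->
  interior F = set0 -> F y ->
  exists g : K -> Y,
    [/\ (forall p : Y, exists u : beta K, betaext g u p),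
        g @ x --> y,
        (forall xi, ~ F (g xi)) &
        beta_nowhere_dense [set u : beta K | exists2 p, betaext g u p & F p]].
Proof.
move=> Kinf xU xreg _ Yhaus wY F0 _.
have [D [h [nxD hD]]] :=
  free_ultra_small_onto xU (regular_notin_finite Kinf _ xreg).
have xnD : x (~` D) by case: (in_ultra_setVsetC D xU).
have [b [bo bnbhs]] := weight_le_indexed_basis wY y.
have [E [xE Efin]] := xreg.
pose W xi := [set v | (D xi -> b (h xi) v) /\
                      (~ D xi -> forall a, E a xi -> b a y -> b a v)].
have [g gW] : exists g : K -> Y, forall xi, W xi (g xi) /\ ~ F (g xi).
  apply: interior_eq0_choice F0 _ => xi; have [Dxi|nDxi] := pselect (D xi).
    have [p bp] := (bo (h xi)).2; exists p.
    by apply: filterS (open_nbhs_nbhs (conj (bo _).1 bp)) => v.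
  have Sfin : finite_set [set a | E a xi /\ b a y].
    by apply: sub_finite_set (Efin xi) => a [].
  exists y; apply: filterS (filter_bigcap_finite (nbhs_filter y) Sfin
    (fun a ab => open_nbhs_nbhs (conj (bo a).1 ab.2))) => v bv.
  by split=> // _ a Ea bay; exact: bv.
exists g; split.
- move=> p; apply: betaext_closure_range => N /bnbhs[k [bkp bkN]].
  have [d Dd hdk] : (h @` D) k by rewrite hD.
  have [[gD _] _] := gW d.
  by exists (g d); split; [exists d | apply/bkN; rewrite -hdk; exact: gD].
- move=> N /bnbhs[a [bay baN]]; change (x (g @^-1` N)).
  apply: filterS (filterI (xE a) xnD) => xi [Exi nDxi].
  by have [[_ gE] _] := gW xi; apply: baN; exact: gE.
- by move=> xi; case: (gW xi).
- apply: beta_nowhere_dense_free => u xi [p gup Fp] uxi.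
  by case: (gW xi) => _; rewrite -(betaext_principal Yhaus uxi gup).
Qed.
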